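(* Let $r\ge 3$ and let $k_0,k_1,\dots,k_{r-1}$ be integers with $3\le k_0\le k_1\le \cdots \le k_{r-1}$. Then for every integer $m$ with $2\le m\le r-1$, \[ S(r;k_0,\dots,k_{r-1}) \ge \Bigl(\prod_{j=m}^{r-1}k_j\Bigr)\,S(m;k_0,\dots,k_{m-1}) -\sum_{i=m}^{r-1}\prod_{j=i+1}^{r-1}k_j, \] where an empty product is interpreted as $1$.
   Context: For an integer $k\ge 3$, let $\mathcal{L}(k)$ denote the equation $x_1+x_2+\cdots+x_{k-1}=x_k$ in positive integer variables (the $x_i$ need not be distinct). For $N\ge1$, write $[1,N]=\{1,2,\dots,N\}$. For integers $r\ge1$ and $k_0,\dots,k_{r-1}\ge 3$, the generalized Schur number $S(r;k_0,\dots,k_{r-1})$ is the least positive integer $N$ such that for every coloring $\Delta:[1,N]\to\{0,1,\dots,r-1\}$ there exist some $i\in\{0,\dots,r-1\}$ and positive integers $x_1,\dots,x_{k_i}\in[1,N]$ satisfying $\mathcal{L}(k_i)$ with $\Delta(x_1)=\cdots=\Delta(x_{k_i})=i$. *)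

From mathcomp Require Import all_boot.
Set Implicit Arguments. Unset Strict Implicit. Unset Printing Implicit Defensive.

(* The sequence k_0, k_1, ... is given as k : nat -> nat; only k i for
   i < r matters.  A colouring of [1,N] with r colours is a function
   c : nat -> 'I_r (only its values on [1,N] matter). *)

Definition has_mono_sol (r : nat) (k : nat -> nat) (N : nat) : Prop :=
  forall c : nat -> 'I_r,
    exists i : 'I_r, exists x : nat -> nat,
      (forall j, j < k i -> (1 <= x j <= N) /\ c (x j) = i) /\
      \sum_(j < (k i).-1) x j = x (k i).-1.

Definition is_schur_number (r : nat) (k : nat -> nat) (S : nat) : Prop :=
  0 < S /\ has_mono_sol r k S /\
  (forall N, 0 < N -> N < S -> ~ has_mono_sol r k N).

From mathcomp Require Import all_boot zify.

(* A t-colouring c of [1, N] without monochromatic solutions extends to a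
   (t+1)-colouring of [1, D + N] = [1, k_t (N+1) - 2], where
   D = (k_t - 1)(N+1) - 1: colour (N, D] with the new colour and y in (D, D+N]
   like y - D.  The new colour has no solution, since k_t - 1 summands above N
   already exceed D.  For an old colour, moving the elements above D down by D
   changes the two sides of the equation by D times the number of moved
   elements; the size bounds force these multiples to agree, leaving a solution
   for c.  Starting from S(m) - 1 and extending once for each of the colours
   m, ..., r - 1, the interval lengths L satisfy L' + 1 = k (L + 1) - 1, whose
   closed form is the bound of the theorem. *)

Set Implicit Arguments.
Unset Strict Implicit.
Unset Printing Implicit Defensive.

Lemma carry_cancel D N S h e y :
  N <= D -> h <= S <= D -> 0 < y <= N -> e <= 1 ->
  S + D * h = y + D * e -> S = y.
Proof.
move=> ND /andP[hS SD] /andP[y0 yN] e1.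
case: e e1 => [|[|//]] _; case: h hS => [|[|h]] hS; nia.
Qed.

Section Extension.
Variables (t : nat) (k : nat -> nat) (N : nat).
Hypotheses (kt_gt1 : 1 < k t) (k_le_kt : forall i, i < t -> k i <= k t).

Let D := (k t).-1 * N.+1 - 1.
Let unshift y := if N < y then y - D else y.

Definition ext_colouring (c : nat -> 'I_t) (y : nat) : 'I_t.+1 :=
  if N < y <= D then ord_max else lift ord_max (c (unshift y)).

Lemma ext_colouring_lift c (j : 'I_t) y :
  0 < y <= D + N -> ext_colouring c y = lift ord_max j ->
  [/\ 0 < unshift y <= N, c (unshift y) = j & y = unshift y + D * (N < y)].
Proof.
rewrite /ext_colouring /unshift => /andP[y0 yDN].
case: ifP => [_ /eqP | /negbT]; first by rewrite (negbTE (neq_lift _ _)).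
move=> notmid /lift_inj cj; split=> //; case: ltnP notmid => /= Ny; lia.
Qed.

Lemma ext_colouring_ord_max c y : ext_colouring c y = ord_max -> N < y <= D.
Proof.
rewrite /ext_colouring; case: ifP => // _ /eqP.
by rewrite eq_sym (negbTE (neq_lift _ _)).
Qed.

Lemma sum_mid_block_neq (x : nat -> nat) :
  (forall l, l < k t -> N < x l <= D) ->
  \sum_(l < (k t).-1) x l != x (k t).-1.
Proof.
move=> xmid; have kt_pred : (k t).-1 < k t by rewrite ltn_predL ltnW.
have lower : (k t).-1 * N.+1 <= \sum_(l < (k t).-1) x l.
  rewrite -[X in X * _]card_ord -sum_nat_const; apply: leq_sum => l _.
  by case/andP: (xmid l (ltn_trans (ltn_ord l) kt_pred)).
apply/eqP=> sum_eq; move: lower; rewrite sum_eq.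
by case/andP: (xmid _ kt_pred); rewrite /D; lia.
Qed.

Lemma unshift_sum_eq c (j : 'I_t) (x : nat -> nat) :
  (forall l, l < k j -> 0 < x l <= D + N /\ ext_colouring c (x l) = lift ord_max j) ->
  \sum_(l < (k j).-1) x l = x (k j).-1 ->
  \sum_(l < (k j).-1) unshift (x l) = unshift (x (k j).-1).
Proof.
move=> xcol sum_eq; case: (posnP (k j)) => [kj0 | kj_gt0].
  by move: sum_eq; rewrite kj0 !big_ord0 => <-.
have xl l : l < k j -> [/\ 0 < unshift (x l) <= N, c (unshift (x l)) = j
                         & x l = unshift (x l) + D * (N < x l)].
  by move=> /xcol[xr]; apply: ext_colouring_lift.
have n_lt : (k j).-1 < k j by rewrite ltn_predL.
have ltn_k l : l < (k j).-1 -> l < k j by move/ltn_trans; apply.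
set S := \sum_(l < _) unshift (x l).
set h := \sum_(l < (k j).-1) (N < x l).
have decomp : \sum_(l < (k j).-1) x l = S + D * h.
  rewrite big_distrr -big_split; apply: eq_bigr => l _.
  by case: (xl l (ltn_k l (ltn_ord l))).
have h_le_S : h <= S.
  apply: leq_sum => l _; case: (xl l (ltn_k l (ltn_ord l))) => /andP[pos _] _ _.
  exact: leq_trans (leq_b1 _) pos.
have S_le_D : S <= D.
  apply: (@leq_trans ((k t).-1 * N)); last by rewrite /D; nia.
  apply: (@leq_trans ((k j).-1 * N)); last first.
    by rewrite leq_mul2r -!subn1 leq_sub2r ?k_le_kt ?orbT.
  rewrite -[X in X * _]card_ord -sum_nat_const; apply: leq_sum => l _.
  by case: (xl l (ltn_k l (ltn_ord l))) => /andP[].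
have N_le_D : N <= D by rewrite /D; nia.
case: (xl _ n_lt) => last_range _ last_eq.
apply: (carry_cancel (h := h) N_le_D _ last_range (leq_b1 (N < x _))).
  by rewrite h_le_S S_le_D.
by rewrite -decomp sum_eq {1}last_eq.
Qed.

Lemma has_mono_sol_ext : has_mono_sol t.+1 k (k t * N.+1 - 2) -> has_mono_sol t k N.
Proof.
have -> : k t * N.+1 - 2 = D + N by rewrite /D; nia.
move=> sol c; have [i [x [xcol sum_eq]]] := sol (ext_colouring c).
case: (unliftP ord_max i) => [j ->|->] in xcol sum_eq *.
- rewrite lift_max in xcol sum_eq.
  exists j, (fun l => unshift (x l)); split.
    by move=> l /xcol[xr ecol]; case: (ext_colouring_lift xr ecol).
  exact: (unshift_sum_eq (c := c) (j := j)).
- exfalso; move/eqP: sum_eq; apply/negP/sum_mid_block_neq => l.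
  by case/xcol=> _ /ext_colouring_ord_max.
Qed.

End Extension.

Lemma has_mono_solW t k N N' : N <= N' -> has_mono_sol t k N -> has_mono_sol t k N'.
Proof.
move=> le_N sol c; have [i [x [xcol sum_eq]]] := sol c.
exists i, x; split=> // l /xcol[/andP[x_gt0 x_le] xc]; split=> //.
by rewrite x_gt0 (leq_trans x_le le_N).
Qed.

Lemma no_mono_sol_lt t k N N' :
  has_mono_sol t k N' -> ~ has_mono_sol t k N -> N < N'.
Proof. by rewrite ltnNge => sol nsol; apply/negP => /has_mono_solW/(_ sol). Qed.

Lemma no_mono_sol0 t k : 0 < t -> (forall i, i < t -> 0 < k i) -> ~ has_mono_sol t k 0.
Proof.
move=> t_gt0 k_gt0 /(_ (fun=> Ordinal t_gt0)) [i [x [/(_ 0 (k_gt0 i (ltn_ord i)))]]].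
by case=> /andP[/leq_trans/[apply]].
Qed.

Lemma no_mono_sol_schur_pred t k S : 0 < t -> (forall i, i < t -> 0 < k i) ->
  is_schur_number t k S -> ~ has_mono_sol t k S.-1.
Proof.
move=> t_gt0 k_gt0 [S_gt0 [_ minS]].
case: (posnP S.-1) => [-> | pS_gt0]; first exact: no_mono_sol0.
by apply: minS => //; rewrite prednK.
Qed.

Fixpoint ext_length (k : nat -> nat) (m N d : nat) : nat :=
  if d is d.+1 then k (m + d) * (ext_length k m N d).+1 - 2 else N.

Lemma ext_lengthE k m N d : (forall i, m <= i < m + d -> 1 < k i) ->
  (ext_length k m N d).+1 + \sum_(m <= i < m + d) \prod_(i.+1 <= j < m + d) k j
    = (\prod_(m <= j < m + d) k j) * N.+1.
Proof.
elim: d => [|d IH] k_gt1; first by rewrite addn0 !big_geq.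
have kd_gt1 : 1 < k (m + d) by apply: k_gt1; rewrite leq_addr addnS ltnSn.
have k_gt1_d i : m <= i < m + d -> 1 < k i.
  by case/andP=> mi i_lt; apply: k_gt1; rewrite mi addnS ltnW.
rewrite addnS /= big_nat_recr ?leq_addr //= [\prod_((m + d).+1 <= j < _) _]big_geq //.
rewrite (big_nat_recr (m + d) m k) ?leq_addr //=.
rewrite (eq_big_nat _ _ (F2 := fun i => (\prod_(i.+1 <= j < m + d) k j) * k (m + d)));
  last by move=> i /andP[_ i_lt]; rewrite big_nat_recr.
by rewrite -big_distrl /= mulnAC -(IH k_gt1_d); nia.
Qed.

Lemma ext_length_no_mono_sol k m N d :
  1 < k 0 -> (forall i j, i <= j < m + d -> k i <= k j) ->
  ~ has_mono_sol m k N -> ~ has_mono_sol (m + d) k (ext_length k m N d).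
Proof.
move=> k0_gt1; elim: d => [|d IH] k_mono nsol; first by rewrite addn0.
have k_mono_d i j : i <= j < m + d -> k i <= k j.
  by case/andP=> ij j_lt; apply: k_mono; rewrite ij addnS ltnW.
have kd_gt1 : 1 < k (m + d).
  by apply: leq_trans k0_gt1 (k_mono _ _ _); rewrite addnS ltnSn.
have k_le_kd i : i < m + d -> k i <= k (m + d).
  by move=> i_lt; apply: k_mono; rewrite ltnW // addnS ltnSn.
by rewrite addnS /= => /(has_mono_sol_ext kd_gt1 k_le_kd); apply: IH.
Qed.

Lemma homo_leq_lt r (f : nat -> nat) :
  (forall i, i.+1 < r -> f i <= f i.+1) -> forall i j, i <= j < r -> f i <= f j.
Proof.
move=> fS i j /andP[ij jr].
apply: (homo_leq_in (D := [pred i | i < r]) leqnn leq_trans _ _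
         (leq_ltn_trans ij jr) jr ij) => /= [a b _ br c /andP[_ cb] | a _ /fS //].
exact: ltn_trans cb br.
Qed.

Theorem theorem4 (r : nat) (k : nat -> nat) (m Sr Sm : nat) :
  3 <= r ->
  3 <= k 0 ->
  (forall i, i.+1 < r -> k i <= k i.+1) ->
  2 <= m <= r - 1 ->
  is_schur_number r k Sr ->
  is_schur_number m k Sm ->
  (\prod_(m <= j < r) k j) * Sm - \sum_(m <= i < r) \prod_(i.+1 <= j < r) k j
    <= Sr.
Proof.
move=> _ k0_ge3 k_step /andP[m_ge2 m_lt] [_ [sol_r _]] schur_m.
have k_mono := homo_leq_lt k_step.
have k_gt1 i : i < r -> 1 < k i.
  by move=> ir; apply: leq_trans (ltnW k0_ge3) (k_mono 0 i ir).
have r_eq : m + (r - m) = r by lia.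
have nsol_m : ~ has_mono_sol m k Sm.-1.
  by apply: no_mono_sol_schur_pred schur_m => [|i im]; [lia | apply/ltnW/k_gt1; lia].
have nsol_r : ~ has_mono_sol r k (ext_length k m Sm.-1 (r - m)).
  by rewrite -{1}r_eq; apply: ext_length_no_mono_sol (ltnW k0_ge3) _ nsol_m; rewrite r_eq.
have k_gt1_m i : m <= i < m + (r - m) -> 1 < k i.
  by rewrite r_eq => /andP[_ /k_gt1].
have := ext_lengthE Sm.-1 k_gt1_m; rewrite r_eq prednK => [closed|]; last first.
  by case: schur_m.
by have := no_mono_sol_lt sol_r nsol_r; lia.
Qed.
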